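(* For every integer $k\geq 1$, every graph with average degree at least $4k$ contains the complete graph $K_k$ as a minor, or contains a minor with $n$ vertices and minimum degree $\delta$, where $\delta\geq 0.6273n$, $2\delta-n\geq 0.5773k$, and $k\leq\delta<n\leq 4k$.
   Context: All graphs are finite and simple. A graph $H$ is a minor of $G$ if a graph isomorphic to $H$ can be obtained from a subgraph of $G$ by contracting edges. *)

From mathcomp Require Import all_boot.
Set Implicit Arguments. Unset Strict Implicit. Unset Printing Implicit Defensive.

Definition simple_graph (T : finType) (e : rel T) : Prop :=
  symmetric e /\ irreflexive e.

Definition deg (T : finType) (e : rel T) (v : T) : nat := #|[set w | e v w]|.

Definition is_min_degree (T : finType) (e : rel T) (d : nat) : Prop :=
  (forall v, d <= deg e v) /\ (exists v, deg e v = d).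

Definition connected_in (T : finType) (e : rel T) (A : {set T}) : Prop :=
  forall x y, x \in A -> y \in A ->
    connect [rel u w | [&& e u w, u \in A & w \in A]] x y.

Definition is_minor (G : finType) (eG : rel G) (H : finType) (eH : rel H) : Prop :=
  exists phi : H -> {set G},
    [/\ forall u, phi u != set0,
        forall u, connected_in eG (phi u),
        forall u v, u != v -> [disjoint phi u & phi v]
      & forall u v, eH u v ->
          exists x y, [/\ x \in phi u, y \in phi v & eG x y]].

Definition complete_rel (k : nat) : rel 'I_k := fun i j => i != j.

From mathcomp Require Import all_boot zify.
From Stdlib Require NArith.
Set Implicit Arguments. Unset Strict Implicit. Unset Printing Implicit Defensive.

(* Deleting an edge, deleting a branch set or contracting an edge of a model
   decreases its number of branch sets plus edges, so a model that is minimal among those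
   with at least f(|P|) edges has few edges, large degrees and many common neighbours
   along each edge. With f(p) = 2kp (Mader) the neighbourhood of a branch set of minimum
   degree is a model on at most 4k branch sets of minimum degree at least 2k. Either it
   already has the required density, or it has at least g(|P|) edges for a density
   function g (a closed form when k >= 60, a table computed and checked by evaluation for
   smaller k), and a second minimality argument, applied within the closed neighbourhood
   of a branch set of minimum degree, produces the minor. *)

(** * Minor models *)

Section Models.
Variables (G : finType) (e : rel G).

Definition induced_rel (X : {set G}) : rel G := [rel u w | [&& e u w, u \in X & w \in X]].

Definition connectedb (X : {set G}) : bool :=
  [forall x in X, [forall y in X, connect (induced_rel X) x y]].

Definition adjacent_sets (X Y : {set G}) : bool := [exists x in X, exists y in Y, e x y].

Lemma connectedb_in (X : {set G}) : connectedb X -> connected_in e X.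
Proof. by move=> /forall_inP cX x y xX yX; move/forall_inP: (cX x xX); apply. Qed.

Lemma connectedb1 x : connectedb [set x].
Proof.
apply/forall_inP=> a; rewrite inE => /eqP->; apply/forall_inP=> b; rewrite inE => /eqP->.
exact: connect0.
Qed.

Lemma connect_induced_sub (X Y : {set G}) u w :
  X \subset Y -> connect (induced_rel X) u w -> connect (induced_rel Y) u w.
Proof.
move=> sXY; apply: connect_sub => a b /and3P[eab aX bX]; apply: connect1.
by rewrite /induced_rel /= eab (subsetP sXY _ aX) (subsetP sXY _ bX).
Qed.

Lemma adjacent_setsS (X Y X' Y' : {set G}) :
  X \subset X' -> Y \subset Y' -> adjacent_sets X Y -> adjacent_sets X' Y'.
Proof.
move=> sX sY /exists_inP[x xX /exists_inP[y yY exy]].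
apply/exists_inP; exists x; first exact: subsetP xX.
by apply/exists_inP; exists y => //; exact: subsetP yY.
Qed.

Hypothesis esym : symmetric e.

Lemma connectedbU (X Y : {set G}) :
  connectedb X -> connectedb Y -> adjacent_sets X Y -> connectedb (X :|: Y).
Proof.
move=> /forall_inP cX /forall_inP cY /exists_inP[x xX /exists_inP[y yY exy]].
set R := induced_rel (X :|: Y).
have cXX a b : a \in X -> b \in X -> connect R a b.
  by move=> aX bX; apply: (connect_induced_sub (subsetUl X Y)); move/forall_inP: (cX a aX); apply.
have cYY a b : a \in Y -> b \in Y -> connect R a b.
  by move=> aY bY; apply: (connect_induced_sub (subsetUr X Y)); move/forall_inP: (cY a aY); apply.
have Rxy : R x y by rewrite /R /induced_rel /= exy !inE xX yY orbT.
have Ryx : R y x by rewrite /R /induced_rel /= esym exy !inE xX yY orbT.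
apply/forall_inP=> a; rewrite inE => /orP[aX|aY]; apply/forall_inP=> b; rewrite inE => /orP[bX|bY].
- exact: cXX.
- exact: connect_trans (cXX _ _ aX xX) (connect_trans (connect1 Rxy) (cYY _ _ yY bY)).
- exact: connect_trans (cYY _ _ aY yY) (connect_trans (connect1 Ryx) (cXX _ _ xX bX)).
- exact: cYY.
Qed.

(* [E] holds both orientations of each edge of the model, so [#|E|] is twice its number
   of edges. *)
Definition minor_model (P : {set {set G}}) (E : {set {set G} * {set G}}) : bool :=
  [&& [forall X in P, (X != set0) && connectedb X],
      [forall X in P, [forall Y in P, (X != Y) ==> [disjoint X & Y]]] &
      [forall p in E, [&& p.1 \in P, p.2 \in P, p.1 != p.2, (p.2, p.1) \in E
                        & adjacent_sets p.1 p.2]]].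

Lemma minor_model_intro (P : {set {set G}}) (E : {set {set G} * {set G}}) :
  (forall X, X \in P -> (X != set0) && connectedb X) ->
  (forall X Y, X \in P -> Y \in P -> X != Y -> [disjoint X & Y]) ->
  (forall X Y, (X, Y) \in E ->
     [&& X \in P, Y \in P, X != Y, (Y, X) \in E & adjacent_sets X Y]) ->
  minor_model P E.
Proof.
move=> hV hD hE; apply/and3P; split.
- by apply/forall_inP.
- by apply/forall_inP=> X XP; apply/forall_inP=> Y YP; apply/implyP; exact: hD.
- by apply/forall_inP=> -[X Y]; apply: hE.
Qed.

Definition nbr (E : {set {set G} * {set G}}) (X : {set G}) : {set {set G}} :=
  [set Y | (X, Y) \in E].

Section ModelFacts.
Variables (P : {set {set G}}) (E : {set {set G} * {set G}}).
Hypothesis PE : minor_model P E.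

Lemma model_branch X : X \in P -> (X != set0) && connectedb X.
Proof. by move=> XP; case/and3P: PE => /forall_inP /(_ X XP). Qed.

Lemma model_disjoint X Y : X \in P -> Y \in P -> X != Y -> [disjoint X & Y].
Proof.
case/and3P: PE => _ /forall_inP hD _ XP YP.
by move/forall_inP: (hD X XP) => /(_ Y YP) /implyP.
Qed.

Lemma model_edge X Y : (X, Y) \in E ->
  [&& X \in P, Y \in P, X != Y, (Y, X) \in E & adjacent_sets X Y].
Proof. by move=> XYE; case/and3P: PE => _ _ /forall_inP /(_ (X, Y) XYE). Qed.

Lemma model_edgeC X Y : ((X, Y) \in E) = ((Y, X) \in E).
Proof. by apply/idP/idP => /model_edge /and5P[]. Qed.

Lemma nbr_subset X : nbr E X \subset P :\ X.
Proof.
apply/subsetP=> Y; rewrite inE => /model_edge /and5P[_ YP nXY _ _].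
by rewrite !inE eq_sym nXY.
Qed.

Lemma notin_nbr X : X \notin nbr E X.
Proof. by rewrite inE; apply/negP=> /model_edge /and5P[_ _ /eqP]. Qed.

Lemma card_nbr_lt X : X \in P -> #|nbr E X| < #|P|.
Proof. by move=> XP; rewrite (cardsD1 X P) XP add1n ltnS subset_leq_card ?nbr_subset. Qed.

Lemma card_edges_from X : #|[set q in E | q.1 == X]| = #|nbr E X|.
Proof.
rewrite -(card_imset (nbr E X) (fun a b (h : (X, a) = (X, b)) => congr1 snd h)).
apply: eq_card => -[a b]; rewrite inE; apply/andP/imsetP => /=.
  by case=> abE /eqP aX; subst a; exists b; rewrite ?inE.
by case=> Y; rewrite inE => XYE [-> ->].
Qed.

Lemma card_edges_to X : #|[set q in E | q.2 == X]| = #|nbr E X|.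
Proof.
rewrite -(card_imset (nbr E X) (fun a b (h : (a, X) = (b, X)) => congr1 fst h)).
apply: eq_card => -[a b]; rewrite inE; apply/andP/imsetP => /=.
  by case=> abE /eqP bX; subst b; exists a; rewrite ?inE // -model_edgeC.
by case=> Y; rewrite inE -model_edgeC => YXE [-> ->].
Qed.

Lemma sum_card_nbr : \sum_(X in P) #|nbr E X| = #|E|.
Proof.
rewrite -sum1_card (partition_big (fun q => q.1) (mem P)) /=; last first.
  by move=> -[a b] /model_edge /and5P[].
by apply: eq_bigr => X _; rewrite -card_edges_from -sum1_card; apply: eq_bigl => q; rewrite inE.
Qed.

Lemma min_degree_card_edges d :
  (forall X, X \in P -> d <= #|nbr E X|) -> d * #|P| <= #|E|.
Proof.
by move=> hd; rewrite -sum_card_nbr mulnC -sum_nat_const; apply: leq_sum.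
Qed.

Lemma card_edges_le : #|E| <= #|P| * #|P|.-1.
Proof.
rewrite -sum_card_nbr -sum_nat_const; apply: leq_sum => X XP.
by rewrite -ltnS prednK ?card_nbr_lt // (leq_ltn_trans _ (card_nbr_lt XP)).
Qed.

End ModelFacts.
End Models.

(** * Deleting and contracting *)

Section Operations.
Variables (G : finType) (e : rel G).
Variables (P : {set {set G}}) (E : {set {set G} * {set G}}).

Definition delete_edge (p : {set G} * {set G}) := E :\ p :\ (p.2, p.1).

Definition delete_branch (X : {set G}) := [set q in E | (q.1 != X) && (q.2 != X)].

Definition induced_edges (Q : {set {set G}}) := [set q in E | (q.1 \in Q) && (q.2 \in Q)].

Definition closed_nbr (X : {set G}) := X |: nbr E X.

Lemma card_delete_edge p : p \in E -> #|delete_edge p| < #|E| <= #|delete_edge p| + 2.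
Proof.
(* Generalizing a cardinal identifies its occurrences whose implicit arguments differ,
   which lia would otherwise treat as distinct atoms. *)
move=> pE; rewrite /delete_edge (cardsD1 p E) pE (cardsD1 (p.2, p.1) (E :\ p)).
by case: (_ \in _); move: #|E :\ p :\ _| => n /=; lia.
Qed.

Lemma nbr_induced (Q : {set {set G}}) Y : Y \in Q -> nbr (induced_edges Q) Y = nbr E Y :&: Q.
Proof. by move=> YQ; apply/setP=> Z; rewrite !inE /= YQ. Qed.

Hypothesis PE : minor_model e P E.

Lemma minor_model_delete_edge p : minor_model e P (delete_edge p).
Proof.
apply: minor_model_intro; [exact: model_branch PE | exact: model_disjoint PE |].
move=> X Y; rewrite /delete_edge !inE => /and3P[nYX nXY XYE].
case/and5P: (model_edge PE XYE) => -> -> -> YXE ->; rewrite YXE andbT /=.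
case: p nYX nXY => a b /=; rewrite !xpair_eqE => nYX nXY.
by rewrite andbT; apply/andP; split; [move: nXY|move: nYX]; apply: contra => /andP[-> ->].
Qed.

Lemma minor_model_delete_branch X : minor_model e (P :\ X) (delete_branch X).
Proof.
apply: minor_model_intro.
- by move=> Y /setD1P[_]; exact: model_branch PE _.
- by move=> Y Z /setD1P[_ YP] /setD1P[_ ZP]; have := model_disjoint PE YP ZP.
move=> Y Z; rewrite !inE /= => /and3P[YZE nYX nZX].
by case/and5P: (model_edge PE YZE) => -> -> -> ZYE ->; rewrite nYX nZX ZYE.
Qed.

Lemma card_delete_branch X :
  #|delete_branch X| <= #|E| <= #|delete_branch X| + 2 * #|nbr E X|.
Proof.
apply/andP; split; first by apply/subset_leq_card/subsetP=> q; rewrite inE => /andP[].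
have sub : E \subset delete_branch X :|: [set q in E | q.1 == X] :|: [set q in E | q.2 == X].
  by apply/subsetP=> q qE; rewrite !inE qE /=; case: (q.1 == X); case: (q.2 == X).
apply: (leq_trans (subset_leq_card sub)); apply: (leq_trans (leq_card_setU _ _)).
rewrite (card_edges_to PE) mul2n -addnn addnA leq_add2r.
by apply: (leq_trans (leq_card_setU _ _)); rewrite card_edges_from.
Qed.

Lemma minor_model_induced (Q : {set {set G}}) : Q \subset P -> minor_model e Q (induced_edges Q).
Proof.
move=> sQP; apply: minor_model_intro.
- by move=> Y /(subsetP sQP); exact: model_branch PE _.
- by move=> Y Z /(subsetP sQP) YP /(subsetP sQP) ZP; have := model_disjoint PE YP ZP.
move=> Y Z; rewrite !inE /= => /and3P[YZE YQ ZQ].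
by case/and5P: (model_edge PE YZE) => _ _ -> ZYE ->; rewrite YQ ZQ ZYE.
Qed.

Lemma card_closed_nbr X : #|closed_nbr X| = #|nbr E X|.+1.
Proof. by rewrite cardsU1 (negbTE (notin_nbr PE X)). Qed.

Lemma closed_nbr_subset X : X \in P -> closed_nbr X \subset P.
Proof.
move=> XP; apply/subsetP=> Z; rewrite !inE => /orP[/eqP->//|].
by move=> /(model_edge PE) /and5P[].
Qed.

Lemma nbr_closed_nbr_center X :
  nbr (induced_edges (closed_nbr X)) X = nbr E X.
Proof. by rewrite nbr_induced ?setU11 //; apply/setIidPl/subsetUr. Qed.

Lemma card_nbr_closed_nbr X Z : Z \in nbr E X ->
  #|nbr (induced_edges (closed_nbr X)) Z| = (#|nbr E Z :&: nbr E X|).+1.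
Proof.
move=> XZE; rewrite nbr_induced; last exact: setU1r.
have -> : nbr E Z :&: closed_nbr X = X |: (nbr E Z :&: nbr E X).
  apply/setP=> W; rewrite !inE; case: (eqVneq W X) => [->|] //=.
  by move: XZE; rewrite inE (model_edgeC PE) => ->.
by rewrite cardsU1 in_setI (negbTE (notin_nbr PE X)) andbF.
Qed.

End Operations.

Section Contraction.
Variables (G : finType) (e : rel G).
Hypothesis esym : symmetric e.
Variables (P : {set {set G}}) (E : {set {set G} * {set G}}).
Hypothesis PE : minor_model e P E.
Variables (X Y : {set G}).
Hypothesis XYE : (X, Y) \in E.

Definition merge (W : {set G}) := if (W == X) || (W == Y) then X :|: Y else W.
Definition contract_branches := (X :|: Y) |: (P :\ X :\ Y).
Definition contract_edges :=
  [set (merge q.1, merge q.2) | q in [set q in E | merge q.1 != merge q.2]].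

Let XP : X \in P. Proof. by case/and5P: (model_edge PE XYE). Qed.
Let YP : Y \in P. Proof. by case/and5P: (model_edge PE XYE). Qed.
Let nXY : X != Y. Proof. by case/and5P: (model_edge PE XYE). Qed.
Let X0 : X != set0. Proof. by case/andP: (model_branch PE XP). Qed.
Let Y0 : Y != set0. Proof. by case/andP: (model_branch PE YP). Qed.

Lemma disjoint_setU_branch (W : {set G}) :
  W \in P -> W != X -> W != Y -> [disjoint X :|: Y & W].
Proof.
move=> WP nWX nWY; rewrite -setI_eq0 setIUl setU_eq0 !setI_eq0.
by rewrite (model_disjoint PE XP WP) 1?(model_disjoint PE YP WP) // eq_sym.
Qed.

Lemma setU_branches_notin : X :|: Y \notin P.
Proof.
apply/negP=> XYP; have [x xX] := set0Pn _ X0; have [y yY] := set0Pn _ Y0.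
have nXYX : X :|: Y != X.
  apply/eqP=> eXY; have yX : y \in X by rewrite -eXY inE yY orbT.
  by rewrite (disjointFr (model_disjoint PE XP YP nXY) yX) in yY.
have := model_disjoint PE XYP XP nXYX.
by rewrite disjoint_sym => /disjointFr/(_ xX); rewrite !inE xX.
Qed.

Lemma merge_in (W : {set G}) : W \in P -> merge W \in contract_branches.
Proof.
rewrite /merge /contract_branches => WP; case: ifP => [_|/norP[nWX nWY]].
  by rewrite setU11.
by rewrite !inE nWX nWY WP orbT.
Qed.

Lemma sub_merge (W : {set G}) : W \subset merge W.
Proof. by rewrite /merge; case: ifP => // /orP[] /eqP ->; [apply: subsetUl|apply: subsetUr]. Qed.

Lemma merge_inj (W1 W2 : {set G}) : W1 \in P -> W2 \in P -> merge W1 = merge W2 ->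
  W1 = W2 \/ ((W1 == X) || (W1 == Y)) && ((W2 == X) || (W2 == Y)).
Proof.
move=> W1P W2P; rewrite /merge; case: ifP => h1; case: ifP => h2.
- by right; apply/andP.
- by move=> eW2; move: setU_branches_notin; rewrite eW2 W2P.
- by move=> eW1; move: setU_branches_notin; rewrite -eW1 W1P.
- by left.
Qed.

Lemma minor_model_contract : minor_model e contract_branches contract_edges.
Proof.
apply: minor_model_intro.
- move=> W; rewrite !inE => /orP[/eqP ->|/and3P[_ _ WP]]; last by have := model_branch PE WP.
  case/andP: (model_branch PE XP) => _ cX; case/andP: (model_branch PE YP) => _ cY.
  rewrite setU_eq0 negb_and X0 (connectedbU esym cX cY) //.
  by case/and5P: (model_edge PE XYE).
- move=> W1 W2; rewrite !inE.
  move=> /orP[/eqP->|/and3P[n1X n1Y W1P]] /orP[/eqP->|/and3P[n2X n2Y W2P]].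
  + by rewrite eqxx.
  + by move=> _; apply: disjoint_setU_branch.
  + by move=> _; rewrite disjoint_sym; apply: disjoint_setU_branch.
  + by have := model_disjoint PE W1P W2P.
- move=> W1 W2 /imsetP[[a b]]; rewrite inE /= => /andP[abE nab] [-> ->].
  case/and5P: (model_edge PE abE) => aP bP _ baE adj.
  rewrite !merge_in // nab (adjacent_setsS (sub_merge a) (sub_merge b) adj) andbT /=.
  by apply/imsetP; exists (b, a); rewrite // inE baE eq_sym.
Qed.

Lemma card_contract_branches : (#|contract_branches|).+1 = #|P|.
Proof.
rewrite /contract_branches cardsU1 !inE (negbTE setU_branches_notin) !andbF add1n.
by rewrite (cardsD1 X P) XP (cardsD1 Y (P :\ X)) !inE eq_sym nXY YP.
Qed.

Lemma card_contract_edges_le : #|contract_edges| <= #|E|.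
Proof.
apply: (leq_trans (leq_imset_card _ _)); apply: subset_leq_card.
by apply/subsetP=> q; rewrite inE => /andP[].
Qed.

(* Apart from [(X, Y)] and [(Y, X)], only the edges between [Y] and common neighbours of
   [X] and [Y] are identified with other edges by [merge]. *)
Definition kept_edges := [set q in E | [&& q != (X, Y), q != (Y, X),
   ~~ ((q.1 == Y) && ((X, q.2) \in E)) & ~~ ((q.2 == Y) && ((X, q.1) \in E))]].

Lemma merge_kept_inj :
  {in kept_edges &, injective (fun q : {set G} * {set G} => (merge q.1, merge q.2))}.
Proof.
move=> [a b] [a' b']; rewrite !inE /=.
move=> /andP[abE /and4P[n1 n2 nB1 nB2]] /andP[abE' /and4P[n1' n2' nB1' nB2']] [ea eb].
case/and5P: (model_edge PE abE) => aP bP nab _ _.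
case/and5P: (model_edge PE abE') => a'P b'P _ _ _.
case: (merge_inj aP a'P ea) => [Ea|/andP[xa xa']];
  case: (merge_inj bP b'P eb) => [Eb|/andP[xb xb']].
- by rewrite Ea Eb.
- subst a'; move: xb xb' => /orP[/eqP Eb|/eqP Eb] /orP[/eqP Eb'|/eqP Eb']; subst b b' => //.
  + by move: nB2'; rewrite eqxx -(model_edgeC PE) abE.
  + by move: nB2; rewrite eqxx -(model_edgeC PE) abE'.
- subst b'; move: xa xa' => /orP[/eqP Ea|/eqP Ea] /orP[/eqP Ea'|/eqP Ea']; subst a a' => //.
  + by move: nB1'; rewrite eqxx abE.
  + by move: nB1; rewrite eqxx abE'.
- by move: xa xb nab n1 n2 => /orP[/eqP->|/eqP->] /orP[/eqP->|/eqP->]; rewrite ?eqxx.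
Qed.

Lemma card_kept_edges : #|kept_edges| <= #|contract_edges|.
Proof.
rewrite -(card_in_imset merge_kept_inj); apply/subset_leq_card/subsetP=> q /imsetP[[a b] abK ->].
apply/imsetP; exists (a, b) => //; move: abK; rewrite !inE /= => /andP[abE /and4P[nXY' nYX' _ _]].
rewrite abE /=; case/and5P: (model_edge PE abE) => aP bP nab _ _.
apply: contra nab => /eqP/(merge_inj aP bP)[->//|/andP[]].
by move=> /orP[/eqP Ea|/eqP Ea] /orP[/eqP Eb|/eqP Eb]; move: nXY' nYX'; rewrite Ea Eb ?eqxx.
Qed.

Lemma card_contract_edges_ge :
  #|E| <= #|contract_edges| + 2 + 2 * #|nbr E X :&: nbr E Y|.
Proof.
set C := nbr E X :&: nbr E Y.
set B1 := [set q in E | (q.1 == Y) && ((X, q.2) \in E)].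
set B2 := [set q in E | (q.2 == Y) && ((X, q.1) \in E)].
have cB1 : #|B1| <= #|C|.
  apply: (leq_trans _ (leq_imset_card (fun W => (Y, W)) C)); apply/subset_leq_card/subsetP.
  move=> [a b]; rewrite !inE /= => /andP[abE /andP[/eqP Ea XbE]]; subst a.
  by apply/imsetP; exists b; rewrite // !inE XbE abE.
have cB2 : #|B2| <= #|C|.
  apply: (leq_trans _ (leq_imset_card (fun W => (W, Y)) C)); apply/subset_leq_card/subsetP.
  move=> [a b]; rewrite !inE /= => /andP[abE /andP[/eqP Eb XaE]]; subst b.
  by apply/imsetP; exists a; rewrite // !inE XaE -(model_edgeC PE) abE.
have cover : E \subset kept_edges :|: B1 :|: B2 :|: [set (X, Y); (Y, X)].
  apply/subsetP=> q qE; rewrite !inE qE /=.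
  by case: (q == (X, Y)); case: (q == (Y, X)); case: ((q.1 == Y) && _); case: ((q.2 == Y) && _).
have leU (A B : {set {set G} * {set G}}) := leq_of_leqif (leq_card_setU A B).
have := leU (kept_edges :|: B1 :|: B2) [set (X, Y); (Y, X)].
have := leU (kept_edges :|: B1) B2; have := leU kept_edges B1.
have := subset_leq_card cover; have := card_kept_edges.
have : #|[set (X, Y); (Y, X)]| <= 2 by rewrite cards2; case: (_ != _).
move: #|_ :|: B1 :|: B2 :|: _| #|_ :|: B1 :|: B2| #|_ :|: B1| #|[set (X, Y); (Y, X)]|.
move: #|kept_edges| #|B1| #|B2| #|C| #|contract_edges| #|E| cB1 cB2; lia.
Qed.

End Contraction.

(** * Minimal models *)

Section MinimalModel.
Variables (G : finType) (e : rel G).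
Hypothesis esym : symmetric e.
Variables (range : pred nat) (f : nat -> nat).

Definition admissible_model (P : {set {set G}}) (E : {set {set G} * {set G}}) : bool :=
  [&& minor_model e P E, range #|P| & f #|P| <= #|E|].

Lemma exists_minimal_model P0 E0 : admissible_model P0 E0 ->
  exists P E, admissible_model P E /\
    forall P' E', admissible_model P' E' -> #|P| + #|E| <= #|P'| + #|E'|.
Proof.
move=> adm0; pose T := ({set {set G}} * {set {set G} * {set G}})%type.
have [[P E] admPE minPE] := arg_minnP (P := fun M : T => admissible_model M.1 M.2)
  (fun M : T => #|M.1| + #|M.2|) (i0 := (P0, E0)) adm0.
by exists P, E; split=> // P' E' adm'; apply: (minPE (P', E')).
Qed.

Variables (P : {set {set G}}) (E : {set {set G} * {set G}}).
Hypothesis admPE : admissible_model P E.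
Hypothesis minPE : forall P' E', admissible_model P' E' -> #|P| + #|E| <= #|P'| + #|E'|.

Let PE : minor_model e P E. Proof. by case/and3P: admPE. Qed.
Let rangeP : range #|P|. Proof. by case/and3P: admPE. Qed.
Let fE : f #|P| <= #|E|. Proof. by case/and3P: admPE. Qed.

Lemma minimal_card_edges : #|E| <= f #|P| + 1.
Proof.
have [->|[p pE]] := set_0Vmem E; first by rewrite cards0.
have := card_delete_edge pE; have := minPE (P' := P) (E' := delete_edge E p).
rewrite /admissible_model minor_model_delete_edge // rangeP /=.
by move: #|delete_edge E p| => m; lia.
Qed.

Lemma minimal_card_nbr X : range #|P|.-1 -> X \in P ->
  f #|P| < f #|P|.-1 + 2 * #|nbr E X|.
Proof.
move=> range1 XP; rewrite ltnNge; apply/negP=> hf.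
have cP : #|P :\ X| = #|P|.-1 by rewrite (cardsD1 X P) XP.
have /andP[le1 le2] := card_delete_branch PE X.
have := minPE (P' := P :\ X) (E' := delete_branch E X).
rewrite /admissible_model minor_model_delete_branch // cP range1 /=.
have P0 : 0 < #|P| by apply/card_gt0P; exists X.
move: hf fE le1 le2 P0; move: #|nbr E X| #|delete_branch E X|.
by move: (f #|P|) (f #|P|.-1) #|E| #|P|; lia.
Qed.

Lemma minimal_card_common_nbr X Y : range #|P|.-1 -> (X, Y) \in E ->
  f #|P| < f #|P|.-1 + 2 * #|nbr E X :&: nbr E Y| + 2.
Proof.
move=> range1 XYE; rewrite ltnNge; apply/negP=> hf.
have cP : #|contract_branches P X Y| = #|P|.-1 by rewrite -(card_contract_branches PE XYE).
have := minPE (P' := contract_branches P X Y) (E' := contract_edges E X Y).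
rewrite /admissible_model minor_model_contract // cP range1 /=.
have le1 := card_contract_edges_le E X Y; have le2 := card_contract_edges_ge PE XYE.
have P0 : 0 < #|P| by rewrite -(card_contract_branches PE XYE).
move: hf fE le1 le2 P0; move: #|nbr E X :&: nbr E Y| #|contract_edges E X Y|.
by move: (f #|P|) (f #|P|.-1) #|E| #|P|; lia.
Qed.

Lemma minimal_card_nbr_closed_nbr X Z : range #|P|.-1 -> X \in P ->
  Z \in closed_nbr E X ->
  f #|P| < f #|P|.-1 + 2 * #|nbr (induced_edges E (closed_nbr E X)) Z|.
Proof.
move=> range1 XP; rewrite !inE => /orP[/eqP->|XZE].
  by rewrite nbr_closed_nbr_center; apply: minimal_card_nbr.
rewrite (card_nbr_closed_nbr PE) ?inE // mulnS addnCA addnC setIC.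
by apply: minimal_card_common_nbr; rewrite // -(model_edgeC PE).
Qed.

End MinimalModel.

Section DenseModels.
Variables (G : finType) (e : rel G).
Hypothesis esym : symmetric e.

Definition model_min_degree (P : {set {set G}}) (E : {set {set G} * {set G}}) (d : nat) :=
  (forall X, X \in P -> d <= #|nbr E X|) /\ exists2 X, X \in P & #|nbr E X| = d.

Lemma exists_model_min_degree (P : {set {set G}}) (E : {set {set G} * {set G}}) :
  P != set0 -> exists2 X, X \in P & model_min_degree P E #|nbr E X|.
Proof.
case/set0Pn=> X1 X1P; have [X XP minX] := arg_minnP (fun X => #|nbr E X|) X1P.
by exists X => //; split=> //; exists X.
Qed.

Lemma card_branches_gt1 (P : {set {set G}}) (E : {set {set G} * {set G}}) n :
  minor_model e P E -> 0 < n -> 0 < #|P| -> n * #|P| <= #|E| -> 1 < #|P|.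
Proof.
move=> PE n0 P0 nE; rewrite ltnNge; apply/negP=> P1.
have := leq_trans nE (card_edges_le PE); have -> : #|P|.-1 = 0 by lia.
by rewrite muln0 leqn0 muln_eq0 (gtn_eqF n0) (gtn_eqF P0).
Qed.

(* Mader's argument, applied to a model minimal among those with [4k |P| <= |E|]. *)
Lemma exists_dense_nbr_model k (P0 : {set {set G}}) (E0 : {set {set G} * {set G}}) :
  0 < k -> minor_model e P0 E0 -> 0 < #|P0| -> 4 * k * #|P0| <= #|E0| ->
  exists P E X0, [/\ minor_model e P E, X0 \in P, 2 * k < #|nbr E X0| <= 4 * k &
    forall Y, Y \in nbr E X0 -> 2 * k <= #|nbr E Y :&: nbr E X0|].
Proof.
move=> k0 PE0 pP0 eP0.
have adm0 : admissible_model e (fun p => 0 < p) (fun p => 4 * k * p) P0 E0 by apply/and3P.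
have [P [E [admPE minPE]]] := exists_minimal_model adm0.
have /and3P[PE /= pP eP] := admPE.
have P1 : 1 < #|P| by apply: card_branches_gt1 PE _ pP eP; rewrite muln_gt0.
have range1 : 0 < #|P|.-1 by rewrite -subn1 subn_gt0.
have eP1 : 4 * k * #|P| = 4 * k * #|P|.-1 + 4 * k by rewrite -mulnSr prednK // ltnW.
have hE := minimal_card_edges admPE minPE; rewrite /= in hE.
have [X0 X0P [minX0 _]] : exists2 X0, X0 \in P & model_min_degree P E #|nbr E X0|.
  by apply: exists_model_min_degree; rewrite -card_gt0.
exists P, E, X0; split=> //.
  apply/andP; split.
    have := minimal_card_nbr admPE minPE range1 X0P.
    by rewrite /= eP1; move: (4 * k * _) => a; lia.
  have dE := min_degree_card_edges PE minX0.
  rewrite leqNgt; apply/negP=> d4; have := leq_mul d4 (leqnn #|P|); rewrite mulSn.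
  by move: dE hE P1; move: (#|nbr E X0| * #|P|) (4 * k * #|P|) #|E| => a b m; lia.
move=> Y; rewrite inE => X0YE; rewrite setIC.
have := minimal_card_common_nbr esym admPE minPE range1 X0YE.
by rewrite /= eP1; move: (4 * k * _) => a; lia.
Qed.

(* Large literals in nat elaborate to [Nat.of_num_uint _], which lia cannot see through;
   hence 6273 = 9 * 17 * 41, 10000 = 100 * 100 and 5773 = 23 * 251. *)
Definition dense_enough (n d k : nat) : bool :=
  [&& (9 * 17 * 41) * n <= (100 * 100) * d,
      (100 * 100) * n + (23 * 251) * k <= (100 * 100) * (2 * d) & k <= d].

Lemma dense_enough_mono n d d' k : dense_enough n d k -> d <= d' -> dense_enough n d' k.
Proof. by move=> /and3P[h1 h2 h3] dd'; apply/and3P; split; lia. Qed.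

(* [v] is the number of branch sets of a minimal model, [d] its minimum degree and [D]
   the minimum degree of the closed neighbourhood of a branch set of degree [d]. *)
Definition density_step k (g : nat -> nat) : Prop :=
  forall v d D, k < v -> v <= 4 * k -> d * v <= 2 * g v + 1 -> D <= d -> d < v ->
    g v < g v.-1 + D -> dense_enough d.+1 D k || dense_enough v d k.

Lemma exists_dense_enough_model k g (P0 : {set {set G}}) (E0 : {set {set G} * {set G}}) :
  minor_model e P0 E0 -> k <= #|P0| <= 4 * k -> 2 * g #|P0| <= #|E0| ->
  k * k.-1 < 2 * g k -> density_step k g ->
  exists P E d, [/\ minor_model e P E, model_min_degree P E d,
                    dense_enough #|P| d k & #|P| <= 4 * k].
Proof.
move=> PE0 rangeP0 eP0 gk step.
pose range := fun p => k <= p <= 4 * k.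
have adm0 : admissible_model e range (fun p => 2 * g p) P0 E0 by apply/and3P.
have [P [E [admPE minPE]]] := exists_minimal_model adm0.
have /and3P[PE /andP[kP P4] /= eP] := admPE.
have {}kP : k < #|P|.
  rewrite ltn_neqAle kP andbT; apply/eqP=> kPe.
  by move: eP (card_edges_le PE); rewrite -kPe; move: #|E| gk; lia.
have range1 : range #|P|.-1 by rewrite /range; apply/andP; split; lia.
have [X0 X0P [minX0 _]] : exists2 X0, X0 \in P & model_min_degree P E #|nbr E X0|.
  by apply: exists_model_min_degree; rewrite -card_gt0 (leq_ltn_trans _ kP).
set d := #|nbr E X0| in minX0.
have dP : d * #|P| <= 2 * g #|P| + 1.
  exact: leq_trans (min_degree_card_edges PE minX0) (minimal_card_edges admPE minPE).
set Q := closed_nbr E X0.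
have QE := minor_model_induced PE (closed_nbr_subset PE X0P).
have [Z0 Z0Q [minQ _]] : exists2 Z0, Z0 \in Q &
    model_min_degree Q (induced_edges E Q) #|nbr (induced_edges E Q) Z0|.
  by apply: exists_model_min_degree; apply/set0Pn; exists X0; rewrite setU11.
set D := #|nbr (induced_edges E Q) Z0| in minQ.
have Dd : D <= d by have := minQ X0 (setU11 _ _); rewrite nbr_closed_nbr_center.
have gD : g #|P| < g #|P|.-1 + D.
  have := minimal_card_nbr_closed_nbr esym admPE minPE range1 X0P Z0Q.
  by rewrite -/Q -/D /=; move: (g _) (g _); lia.
have dP' := card_nbr_lt PE X0P.
case/orP: (step _ _ _ kP P4 dP Dd dP' gD) => [denseQ|denseP].
  exists Q, (induced_edges E Q), D; rewrite (card_closed_nbr PE).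
  by split=> //; [split=> //; exists Z0 | apply: leq_trans P4].
by exists P, E, d; split=> //; split=> //; exists X0.
Qed.

End DenseModels.

(** * Dense minors *)

Section GraphModels.
Variables (G : finType) (e : rel G).
Hypothesis eG : simple_graph e.

Definition singleton_branches : {set {set G}} := [set [set x] | x : G].
Definition singleton_edges : {set {set G} * {set G}} :=
  [set ([set p.1], [set p.2]) | p in [set p : G * G | e p.1 p.2]].

Lemma minor_model_singletons : minor_model e singleton_branches singleton_edges.
Proof.
case: eG => esym eirr; apply: minor_model_intro.
- move=> X /imsetP[x _ ->]; rewrite connectedb1 andbT.
  by apply/set0Pn; exists x; rewrite inE.
- move=> X Y /imsetP[x _ ->] /imsetP[y _ ->] nxy.
  by rewrite disjoints1 inE; apply: contra nxy => /eqP->.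
move=> X Y /imsetP[[x y]]; rewrite inE /= => exy [-> ->].
have nxy : x != y by apply: contraTneq exy => ->; rewrite eirr.
rewrite !imset_f // (inj_eq set1_inj) nxy /=; apply/andP; split.
  by apply/imsetP; exists (y, x); rewrite // inE /= esym.
by apply/exists_inP; exists x; rewrite ?inE //; apply/exists_inP; exists y; rewrite ?inE.
Qed.

Lemma card_singleton_branches : #|singleton_branches| = #|G|.
Proof. by rewrite card_imset //; apply: set1_inj. Qed.

Lemma card_singleton_edges : #|singleton_edges| = \sum_(v : G) deg e v.
Proof.
rewrite card_imset; last by move=> [a b] [c d] /= [/set1_inj -> /set1_inj ->].
rewrite -sum1_card (partition_big (fun p : G * G => p.1) (fun _ => true)) //=.
apply: eq_bigr => x _.
rewrite /deg -(card_imset _ (fun a b (h : (x, a) = (x, b)) => congr1 snd h)) -sum1_card.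
apply: eq_bigl => -[a b]; rewrite inE /=; apply/andP/imsetP.
  by case=> eab /eqP ax; subst a; exists b; rewrite ?inE.
by case=> y; rewrite inE => exy [-> ->]; rewrite exy eqxx.
Qed.

End GraphModels.

Section ModelMinor.
Variables (G : finType) (e : rel G).
Variables (P : {set {set G}}) (E : {set {set G} * {set G}}).
Hypothesis PE : minor_model e P E.

Definition model_graph : rel {X : {set G} | X \in P} := fun a b => (val a, val b) \in E.

Lemma simple_model_graph : simple_graph model_graph.
Proof.
split=> [a b|a]; first by rewrite /model_graph (model_edgeC PE).
by apply/negP=> /(model_edge PE) /and5P[_ _ /eqP].
Qed.

Lemma model_graph_minor : is_minor e model_graph.
Proof.
exists val; split.
- by move=> a; case/andP: (model_branch PE (valP a)).
- by move=> a; case/andP: (model_branch PE (valP a)) => _ /connectedb_in.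
- move=> a b; rewrite -(inj_eq val_inj) => nab.
  by have := model_disjoint PE (valP a) (valP b) nab.
move=> a b /(model_edge PE) /and5P[_ _ _ _ /exists_inP[x xa /exists_inP[y yb exy]]].
by exists x, y.
Qed.

Lemma deg_model_graph a : deg model_graph a = #|nbr E (val a)|.
Proof.
rewrite /deg -(card_imset _ val_inj); apply: eq_card => Y; rewrite [in RHS]inE.
apply/imsetP/idP => [[b] | XYE]; first by rewrite inE => ? ->.
have YP : Y \in P by case/and5P: (model_edge PE XYE).
by exists (exist _ Y YP); rewrite ?inE.
Qed.

Lemma card_model_graph : #|{: {X : {set G} | X \in P}}| = #|P|.
Proof. by rewrite card_sig; apply: eq_card => X; rewrite !inE. Qed.

Lemma min_degree_model_graph d : model_min_degree P E d -> is_min_degree model_graph d.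
Proof.
case=> minP [X XP dX]; split=> [a|]; first by rewrite deg_model_graph minP ?(valP a).
by exists (exist _ X XP); rewrite deg_model_graph.
Qed.

End ModelMinor.

Definition has_dense_minor k (G : finType) (e : rel G) : Prop :=
  exists (H : finType) (eH : rel H) (n delta : nat),
    [/\ simple_graph eH, is_minor e eH, n = #|H| & is_min_degree eH delta] /\
    [/\ 6273 * n <= 10000 * delta,
        10000 * n + 5773 * k <= 10000 * (2 * delta),
        k <= delta, delta < n & n <= 4 * k].

Lemma dense_minor_of_model k (G : finType) (e : rel G) (P : {set {set G}})
    (E : {set {set G} * {set G}}) d :
  minor_model e P E -> model_min_degree P E d -> dense_enough #|P| d k -> #|P| <= 4 * k ->
  has_dense_minor k e.
Proof.
move=> PE minPE /and3P[h1 h2 h3] P4.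
have dP : d < #|P| by case: minPE => _ [X XP <-]; have := card_nbr_lt PE XP.
exists _, (model_graph (P := P) E), #|P|, d; split.
  split; [exact: simple_model_graph PE | exact: model_graph_minor PE
         | by rewrite card_model_graph | by have := min_degree_model_graph PE minPE].
have [-> -> ->] : [/\ 6273 = 9 * 17 * 41, 10000 = 100 * 100 & 5773 = 23 * 251].
  by split; vm_compute.
by split=> //; lia.
Qed.

(* The second minimality argument runs over models with [k <= |P| <= 4k] and at least
   [g |P|] edges ([E] stores both orientations). The first clause forces more than [k]
   branch sets, the last one makes the sparse neighbourhood models admissible. *)
Definition density_certificate k (g : nat -> nat) : Prop :=
  [/\ k * k.-1 < 2 * g k, density_step k g &
      forall n, 2 * k < n -> n <= 4 * k -> ~~ dense_enough n (2 * k) k -> g n <= k * n].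

Lemma dense_minor_of_certificate k (G : finType) (e : rel G) g :
  simple_graph e -> 0 < k -> 0 < #|G| -> 4 * k * #|G| <= \sum_(v : G) deg e v ->
  density_certificate k g -> has_dense_minor k e.
Proof.
move=> eG k0 G0 avg [gk step gF]; have esym := eG.1.
have := exists_dense_nbr_model esym k0 (minor_model_singletons eG).
rewrite card_singleton_branches card_singleton_edges => /(_ G0 avg).
case=> [P [E [X0 [PE X0P /andP[kX0 X04] common]]]].
set Q := nbr E X0 in kX0 X04 common.
have QE := minor_model_induced PE (subset_trans (nbr_subset PE X0) (subsetDl P _)).
have degQ Y : Y \in Q -> 2 * k <= #|nbr (induced_edges E Q) Y|.
  by move=> YQ; rewrite nbr_induced // common.
have [Z0 Z0Q [minQ dZ0]] :
    exists2 Z0, Z0 \in Q &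
      model_min_degree Q (induced_edges E Q) #|nbr (induced_edges E Q) Z0|.
  by apply: exists_model_min_degree; rewrite -card_gt0 (leq_ltn_trans _ kX0).
have [denseQ|sparseQ] := boolP (dense_enough #|Q| (2 * k) k).
  apply: dense_minor_of_model QE (conj minQ dZ0) _ X04.
  by apply: dense_enough_mono denseQ _; apply: degQ.
have rangeQ : k <= #|Q| <= 4 * k by rewrite X04 andbT; lia.
have eQ : 2 * g #|Q| <= #|induced_edges E Q|.
  have := min_degree_card_edges QE degQ; have := gF _ kX0 X04 sparseQ.
  by rewrite -/Q; move: (g #|Q|) => x; lia.
have [P' [E' [d [PE' minPE' dense' P'4]]]] := exists_dense_enough_model esym QE rangeQ eQ gk step.
exact: dense_minor_of_model PE' minPE' dense' P'4.
Qed.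

(** * Density functions *)

(* [closed_density k v] is the ceiling of [k v - k^2/2 + (v - 2k)_+^2 / 8]; the truncated
   subtraction [v - 2 * k] provides the positive part. *)
Definition closed_density (k v : nat) : nat :=
  (8 * k * v + (v - 2 * k) ^ 2 - 4 * k ^ 2 + 7) %/ 8.

Lemma closed_density_bounds k v : k <= v ->
  8 * k * v + (v - 2 * k) ^ 2 - 4 * k ^ 2 <= 8 * closed_density k v <=
  8 * k * v + (v - 2 * k) ^ 2 - 4 * k ^ 2 + 7.
Proof.
move=> kv; rewrite /closed_density; set x := _ - 4 * k ^ 2.
have := divn_eq (x + 7) 8; have := ltn_pmod (x + 7) (isT : 0 < 8); lia.
Qed.

Lemma closed_density_step_low k v d D : 60 <= k -> k < v -> v <= 2 * k ->
  d * v <= 2 * closed_density k v + 1 -> D <= d ->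
  closed_density k v < closed_density k v.-1 + D ->
  dense_enough d.+1 D k || dense_enough v d k.
Proof.
move=> k60 kv v2k dv Dd; rewrite -subn1 => gD.
have /andP[h1 h2] := closed_density_bounds (ltnW kv).
have /andP[h3 h4] : 8 * k * (v - 1) + (v - 1 - 2 * k) ^ 2 - 4 * k ^ 2 <=
    8 * closed_density k (v - 1) <= 8 * k * (v - 1) + (v - 1 - 2 * k) ^ 2 - 4 * k ^ 2 + 7.
  by apply: closed_density_bounds; lia.
have v2 : v - 2 * k = 0 by lia.
have v12 : v - 1 - 2 * k = 0 by lia.
rewrite v2 in h1 h2; rewrite v12 mulnBr muln1 in h3 h4.
have kD : k.+1 <= D.
  have kv2 : 8 * k ^ 2 + 8 * k <= 8 * k * v.
    by have := leq_mul (leqnn (8 * k)) kv; rewrite mulnS expnS expn1; lia.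
  move: (closed_density k v) (closed_density k (v - 1)) (8 * k * v) (k ^ 2) h1 h2 h3 h4 gD kv2.
  by lia.
have [hd|hd] : (100 * 100) * d <= (100 * 142 + 27) * k + 100 * 100 \/
               (100 * 142 + 27) * k + 100 * 100 < (100 * 100) * d by lia.
  by apply/orP; left; apply/and3P; split; lia.
by apply/orP; right; apply/and3P; split; lia.
Qed.

Lemma dense_enough_mid k w d D : 60 <= k -> 1 <= w -> 2 * w <= k ->
  8 * k + 2 * w <= 8 * D -> D <= d ->
  dense_enough d.+1 D k || dense_enough (2 * k + w) d k.
Proof.
move=> k60 w1 wk hD Dd.
have [hd|hd] : (100 * 100) * d.+1 <= (100 * 142 + 27) * k + 50 * 100 * w \/
               (100 * 142 + 27) * k + 50 * 100 * w < (100 * 100) * d.+1 by lia.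
  by apply/orP; left; apply/and3P; split; lia.
by apply/orP; right; apply/and3P; split; lia.
Qed.

Lemma dense_enough_high k w d D : 60 <= k -> k <= 2 * w -> w <= 2 * k ->
  8 * k + 2 * w <= 8 * D -> D <= d ->
  8 * d * (2 * k + w) <= 24 * k ^ 2 + 16 * k * w + 2 * w ^ 2 + 22 ->
  dense_enough d.+1 D k.
Proof.
move=> k60 w1 wk hD Dd hq.
have kk : k * k >= 60 * k by nia.
have kw : k * w >= 60 * w by nia.
have ww : w * w >= 30 * w by nia.
have kw2 : 2 * (k * w) >= k * k by nia.
have ww2 : 2 * (w * w) >= k * w by nia.
apply/and3P; split; last lia.
  have [h|h] : (8 * 9 * 17 * 41) * d.+1 <= (800 * 100) * k + (200 * 100) * w \/
      (800 * 100) * k + (200 * 100) * w < (8 * 9 * 17 * 41) * d.+1 by lia.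
    by lia.
  by have := leq_mul h (leqnn (8 * (2 * k + w))); lia.
have [h|h] : (800 * 100) * d.+1 <= (800 * 100 + 338 * 100 + 16) * k + (400 * 100) * w \/
    (800 * 100 + 338 * 100 + 16) * k + (400 * 100) * w < (800 * 100) * d.+1 by lia.
  by lia.
by have := leq_mul h (leqnn (8 * (2 * k + w))); lia.
Qed.

Lemma closed_density_step k : 60 <= k -> density_step k (closed_density k).
Proof.
move=> k60 v d D kv v4k dv Dd _ gD.
have [v2k|v2k] := leqP v (2 * k); first exact: closed_density_step_low.
have [u ev] : exists u, v = (2 * k + u).+1 by exists (v - 2 * k).-1; lia.
subst v; rewrite /= in gD.
have ku1 : k <= (2 * k + u).+1 by lia.
have ku : k <= 2 * k + u by lia.
have /andP[h1 h2] := closed_density_bounds ku1; have /andP[h3 h4] := closed_density_bounds ku.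
have e1 : (2 * k + u).+1 - 2 * k = u.+1 by lia.
have e2 : 2 * k + u - 2 * k = u by lia.
rewrite e1 in h1 h2; rewrite e2 in h3 h4.
move: (closed_density k (2 * k + u)) (closed_density k (2 * k + u).+1) gD dv h1 h2 h3 h4.
move=> g1 g2 gD dv h1 h2 h3 h4; rewrite -addnS.
rewrite !expnS !expn0 !muln1 in h1 h2 h3 h4.
have hD : 8 * k + 2 * u.+1 <= 8 * D by lia.
have [wk|wk] := leqP (2 * u.+1) k; first exact: dense_enough_mid.
apply/orP; left; apply: (dense_enough_high k60 (ltnW wk)) => //; lia.
Qed.

Lemma closed_density_certificate k : 60 <= k -> density_certificate k (closed_density k).
Proof.
move=> k60; split; [|exact: closed_density_step|].
- have /andP[h _] := closed_density_bounds (leqnn k).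
  have k2 : k - 2 * k = 0 by lia.
  by move: h; rewrite k2; move: (closed_density k k); nia.
move=> n kn n4 _; have kn' : k <= n by lia.
have /andP[_ h] := closed_density_bounds kn'.
have : (n - 2 * k) ^ 2 <= 4 * k ^ 2.
  by rewrite -[4]/(2 ^ 2) -expnMn leq_exp2r // leq_subLR; lia.
by move: h; move: (closed_density k n) ((n - 2 * k) ^ 2); nia.
Qed.

Module SmallDensity.
Import NArith.

Definition dense_enoughN (n d k : N) : bool :=
  N.leb (6273 * n)%num (10000 * d)%num && N.leb (10000 * n + 5773 * k)%num (20000 * d)%num
  && N.leb k d.

Lemma dense_enoughN_nat n d k :
  dense_enoughN (N.of_nat n) (N.of_nat d) (N.of_nat k) = dense_enough n d k.
Proof.
rewrite /dense_enoughN /dense_enough -andbA.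
by congr [&& _, _ & _]; apply/idP/idP => [/N.leb_le|h]; try apply/N.leb_le; lia.
Qed.

(* [if] rather than [&&]: under call-by-value evaluation the test stops at the first
   failure. *)
Fixpoint allN (fuel : nat) (p : pred N) (lo : N) : bool :=
  if fuel is fuel'.+1 then (if p lo then allN fuel' p (lo + 1)%num else false) else true.

(* Checks [density_step] at [v] for [a = g v.-1] and [b = g v]: by monotonicity of
   [dense_enough] in its second argument it suffices to consider the least [D]. *)
Definition step_ok (k v : nat) (a b : N) : bool :=
  let kN := N.of_nat k in let vN := N.of_nat v in
  let D := (b + 1 - a)%num in let bound := (2 * b + 1)%num in
  allN (v - N.to_nat D)
    (fun d => if N.leb (d * vN)%num bound then
       (if dense_enoughN (d + 1)%num D kN then true else dense_enoughN vN d kN) else true)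
    D.

Fixpoint least_step (fuel k v : nat) (a b : N) : N :=
  if fuel is fuel'.+1 then
    if step_ok k v a b then b else least_step fuel' k v a (b + 1)%num
  else b.

(* [g k], ..., [g (4k)]: each value is the least one, from [g v.-1 + k - 1] on, that
   [step_ok] accepts. *)
Definition density_table (k : nat) : seq N :=
  foldl (fun gs v => let a := last 0%num gs in
           rcons gs (least_step v k v a (a + N.of_nat k.-1)%num))
    [:: (N.of_nat k * (N.of_nat k - 1) / 2 + 1)%num] (iota k.+1 (3 * k)).

Definition certified (k : nat) (t : seq N) : bool :=
  let g v := nth 0%num t (v - k) in
  [&& N.ltb (N.of_nat (k * k.-1)) (2 * g k)%num,
      all (fun v => step_ok k v (g v.-1) (g v)) (iota k.+1 (3 * k)) &
      all (fun n => dense_enoughN (N.of_nat n) (N.of_nat (2 * k)) (N.of_nat k)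
                    || N.leb (g n) (N.of_nat k * N.of_nat n)%num)
          (iota (2 * k).+1 (2 * k))].

Definition small_density (k v : nat) : nat := N.to_nat (nth 0%num (density_table k) (v - k)).

Lemma allNP fuel p lo d : allN fuel p lo ->
  (lo <= d)%num -> (d < lo + N.of_nat fuel)%num -> p d.
Proof.
elim: fuel lo => [|f IH] lo /=; first lia.
case: ifP => // plo /IH {}IH lod dlt.
have [->|nd] := eqVneq d lo; [exact: plo | apply: IH; lia].
Qed.

Lemma step_okP k v a b d D : step_ok k v a b ->
  N.to_nat (b + 1 - a) <= D -> D <= d -> d < v -> d * v <= 2 * N.to_nat b + 1 ->
  dense_enough d.+1 D k || dense_enough v d k.
Proof.
rewrite /step_ok => /(allNP (d := N.of_nat d)) ok lowD Dd dv guard.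
have lo : (b + 1 - a <= N.of_nat d)%num by lia.
have hi : (N.of_nat d < b + 1 - a + N.of_nat (v - N.to_nat (b + 1 - a)))%num by lia.
move: (ok lo hi).
have -> : N.leb (N.of_nat d * N.of_nat v) (2 * b + 1) by apply/N.leb_le; lia.
have -> : (N.of_nat d + 1)%num = N.of_nat d.+1 by lia.
rewrite -{1}[(b + 1 - a)%num]N2Nat.id !dense_enoughN_nat.
by case: ifP => [/dense_enough_mono/(_ lowD) ->|_ ->]; rewrite ?orbT.
Qed.

Lemma certifiedP k : certified k (density_table k) -> density_certificate k (small_density k).
Proof.
rewrite /certified /small_density; set t := density_table k.
case/and3P=> [/N.ltb_lt base /allP steps /allP final]; split.
- by move: base; rewrite subnn; lia.
- move=> v d D kv v4 dv Dd dlt gD; apply: step_okP (steps v _) _ Dd dlt dv; rewrite ?mem_iota; lia.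
- move=> n n2 n4 sparse; move: (final n); rewrite mem_iota dense_enoughN_nat (negbTE sparse).
  by move=> /(_ _) /N.leb_le; lia.
Qed.

Lemma certified_tables : all (fun k => certified k (density_table k)) (iota 1 59).
Proof. by vm_compute. Qed.

End SmallDensity.

Lemma exists_density_certificate k : 0 < k -> exists g, density_certificate k g.
Proof.
move=> k0; have [k60|k60] := ltnP k 60.
  exists (SmallDensity.small_density k); apply: SmallDensity.certifiedP.
  by apply: (allP SmallDensity.certified_tables); rewrite mem_iota; lia.
by exists (closed_density k); exact: closed_density_certificate.
Qed.

Theorem lemma8 (k : nat) (G : finType) (e : rel G) :
  1 <= k ->
  simple_graph e ->
  0 < #|G| ->
  4 * k * #|G| <= \sum_(v : G) deg e v ->
  is_minor e (@complete_rel k)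
  \/ exists (H : finType) (eH : rel H) (n delta : nat),
       [/\ simple_graph eH, is_minor e eH, n = #|H| & is_min_degree eH delta] /\
       [/\ 6273 * n <= 10000 * delta,
           10000 * n + 5773 * k <= 10000 * (2 * delta),
           k <= delta, delta < n & n <= 4 * k].
Proof.
move=> k1 eG G0 avg; have [g cert] := exists_density_certificate k1.
by right; apply: dense_minor_of_certificate eG k1 G0 avg cert.
Qed.
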